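(* Let $(X,\tau_1,\tau_2)$ be a bitopological space which is $(i,j)$-almost regular and a $j$-$P$-space, where $i,j\in\{1,2\}$, $i\neq j$. Then $X$ is $(i,j)_1$-nearly paralindelöf if and only if every cover of $X$ by $(i,j)$-regular open sets has a refinement which is a cover of $X$ by $(i,j)$-regular open sets and is $j$-locally countable.
   Context: $(X,\tau_1,\tau_2)$ is a bitopological space and $i,j\in\{1,2\}$, $i\neq j$. For $k\in\{1,2\}$ and $A\subseteq X$, $k\text{-}\mathrm{int}(A)$ and $k\text{-}\mathrm{cl}(A)$ denote interior and closure with respect to $\tau_k$; ''$k$-open''/''$k$-closed'' mean $\tau_k$-open/$\tau_k$-closed. A set $A$ is $(i,j)$-regular open if $A=i\text{-}\mathrm{int}(j\text{-}\mathrm{cl}(A))$. A family $\mathcal V$ refines a family $\mathcal U$ if every member of $\mathcal V$ is contained in some member of $\mathcal U$; a family is a cover of $X$ if its union is $X$. A family $\mathcal V$ is $k$-locally countable if every $x\in X$ has a $k$-open neighbourhood meeting at most countably many members of $\mathcal V$. $X$ is a $k$-$P$-space if every intersection of countably many $k$-open sets is $k$-open. $X$ is $(i,j)$-almost regular if for each $x\in X$ and each $(i,j)$-regular open set $U$ containing $x$ there is an $(i,j)$-regular open set $V$ with $x\in V\subseteq j\text{-}\mathrm{cl}(V)\subseteq U$. $X$ is $(i,j)_1$-nearly paralindelöf if every cover of $X$ by $(i,j)$-regular open sets has a refinement which is a cover of $X$ by $i$-open sets and which is $j$-locally countable. *)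

From Stdlib Require Import Classical FunctionalExtensionality PropExtensionality.

Definition set (X : Type) := X -> Prop.
Definition subset {X} (A B : set X) := forall x, A x -> B x.

Record topology (X : Type) := Topology {
  is_open : set X -> Prop;
  open_full : is_open (fun _ => True);
  open_empty : is_open (fun _ => False);
  open_inter : forall A B, is_open A -> is_open B ->
                 is_open (fun x => A x /\ B x);
  open_union : forall (F : set X -> Prop), (forall U, F U -> is_open U) ->
                 is_open (fun x => exists U, F U /\ U x)
}.
Arguments is_open {X} _ _.

Definition is_closed {X} (t : topology X) (A : set X) :=
  is_open t (fun x => ~ A x).

Definition interior {X} (t : topology X) (A : set X) : set X :=
  fun x => exists U, is_open t U /\ subset U A /\ U x.

Definition closure {X} (t : topology X) (A : set X) : set X :=
  fun x => forall U, is_open t U -> U x -> exists y, U y /\ A y.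

Inductive idx := I1 | I2.

Definition top {X} (t1 t2 : topology X) (k : idx) : topology X :=
  match k with I1 => t1 | I2 => t2 end.

Definition regular_open {X} (ti tj : topology X) (A : set X) :=
  A = interior ti (closure tj A).

Definition family X := set X -> Prop.

Definition is_cover {X} (F : family X) :=
  forall x, exists U, F U /\ U x.

Definition refines {X} (V U : family X) :=
  forall A, V A -> exists B, U B /\ subset A B.

(* a family of sets is countable: enumerated (possibly with repetitions) by nat *)
Definition countable_family {X} (F : family X) :=
  exists f : nat -> set X, forall A, F A -> exists n, f n = A.

Definition meets {X} (A B : set X) := exists x, A x /\ B x.

Definition locally_countable {X} (t : topology X) (V : family X) :=
  forall x, exists N, is_open t N /\ N x /\
    countable_family (fun A => V A /\ meets N A).

Definition P_space {X} (t : topology X) :=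
  forall G : nat -> set X, (forall n, is_open t (G n)) ->
    is_open t (fun x => forall n, G n x).

Definition almost_regular {X} (ti tj : topology X) :=
  forall x U, regular_open ti tj U -> U x ->
    exists V, regular_open ti tj V /\ V x /\ subset (closure tj V) U.

Definition nearly_paralindelof1 {X} (ti tj : topology X) :=
  forall U : family X, (forall A, U A -> regular_open ti tj A) -> is_cover U ->
    exists V : family X, refines V U /\ is_cover V /\
      (forall A, V A -> is_open ti A) /\ locally_countable tj V.

(* Given a cover U by (i,j)-regular open sets, almost regularity supplies a
   cover by regular open sets V with j-cl V inside a member of U.  Applying
   near paralindelöfness to it gives an i-open, j-locally countable refinement
   W, and replacing each member W by its regularization i-int (j-cl W) keeps
   everything: the sets become regular open, they still cover since an i-open
   W lies in i-int (j-cl W), they still refine U since i-int (j-cl W) lies in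
   j-cl V, and a j-open set meeting i-int (j-cl W) already meets W. *)
From Stdlib Require Import FunctionalExtensionality PropExtensionality.

Lemma interior_open {X} (t : topology X) (A : set X) : is_open t (interior t A).
Proof.
  replace (interior t A)
    with (fun x => exists U, (fun U => is_open t U /\ subset U A) U /\ U x).
  - apply open_union. intros U [HU _]. exact HU.
  - apply functional_extensionality; intro x; apply propositional_extensionality.
    unfold interior; split; intros [U HU]; exists U; tauto.
Qed.

Lemma interior_subset {X} (t : topology X) (A : set X) : subset (interior t A) A.
Proof. intros x [U [_ [HUA Ux]]]. exact (HUA x Ux). Qed.

Lemma open_subset_interior {X} (t : topology X) (A B : set X) :
  is_open t A -> subset A B -> subset A (interior t B).
Proof. intros HA HAB x Ax. exists A; auto. Qed.

Lemma subset_closure {X} (t : topology X) (A : set X) : subset A (closure t A).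
Proof. intros x Ax U _ Ux. exists x; auto. Qed.

Lemma closure_mono {X} (t : topology X) (A B : set X) :
  subset A B -> subset (closure t A) (closure t B).
Proof.
  intros HAB x Hx U HU Ux. destruct (Hx U HU Ux) as [y [Uy Ay]]. exists y; auto.
Qed.

Lemma closure_idem {X} (t : topology X) (A : set X) :
  subset (closure t (closure t A)) (closure t A).
Proof.
  intros x Hx U HU Ux. destruct (Hx U HU Ux) as [y [Uy Hy]]. exact (Hy U HU Uy).
Qed.

Lemma open_meets_closure {X} (t : topology X) (N A : set X) :
  is_open t N -> meets N (closure t A) -> meets N A.
Proof. intros HN [x [Nx Hx]]. exact (Hx N HN Nx). Qed.

Lemma regular_open_open {X} (ti tj : topology X) (A : set X) :
  regular_open ti tj A -> is_open ti A.
Proof. intros ->. apply interior_open. Qed.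

Lemma regular_open_interior_closure {X} (ti tj : topology X) (A : set X) :
  regular_open ti tj (interior ti (closure tj A)).
Proof.
  apply functional_extensionality; intro x; apply propositional_extensionality.
  split.
  - apply open_subset_interior; [apply interior_open | apply subset_closure].
  - apply (open_subset_interior _ _ _ (interior_open _ _)).
    intros y Hy. apply closure_idem.
    apply (closure_mono tj _ _ (interior_subset ti _)).
    exact (interior_subset _ _ y Hy).
Qed.

Definition regularize {X} (ti tj : topology X) (V : family X) : family X :=
  fun A => exists W, V W /\ A = interior ti (closure tj W).

Lemma regularize_regular_open {X} (ti tj : topology X) (V : family X) A :
  regularize ti tj V A -> regular_open ti tj A.
Proof. intros [W [_ ->]]. apply regular_open_interior_closure. Qed.

Lemma regularize_cover {X} (ti tj : topology X) (V : family X) :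
  (forall W, V W -> is_open ti W) -> is_cover V -> is_cover (regularize ti tj V).
Proof.
  intros HV CV x. destruct (CV x) as [W [VW Wx]].
  exists (interior ti (closure tj W)). split.
  - exists W; auto.
  - exact (open_subset_interior _ _ _ (HV W VW) (subset_closure _ _) x Wx).
Qed.

Lemma locally_countable_regularize {X} (ti tj : topology X) (V : family X) :
  locally_countable tj V -> locally_countable tj (regularize ti tj V).
Proof.
  intros LV x. destruct (LV x) as [N [HN [Nx [f Hf]]]].
  exists N. repeat split; auto.
  exists (fun n => interior ti (closure tj (f n))).
  intros A [[W [VW ->]] HNA].
  assert (HNW : meets N W).
  { apply (open_meets_closure tj N W HN).
    destruct HNA as [y [Ny Hy]]. exists y. split; [exact Ny|].
    exact (interior_subset _ _ y Hy). }
  destruct (Hf W (conj VW HNW)) as [n <-]. exists n. reflexivity.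
Qed.

Definition closure_refines {X} (tj : topology X) (V U : family X) :=
  forall A, V A -> exists B, U B /\ subset (closure tj A) B.

Lemma regularize_refines {X} (ti tj : topology X) (V W U : family X) :
  closure_refines tj V U -> refines W V -> refines (regularize ti tj W) U.
Proof.
  intros HVU HWV A [Wf [WWf ->]].
  destruct (HWV Wf WWf) as [Vf [VVf HWfVf]].
  destruct (HVU Vf VVf) as [B [UB HB]].
  exists B. split; [exact UB|].
  intros y Hy. apply HB.
  exact (closure_mono tj _ _ HWfVf y (interior_subset _ _ y Hy)).
Qed.

Lemma almost_regular_shrinking {X} (ti tj : topology X) (U : family X) :
  almost_regular ti tj -> (forall A, U A -> regular_open ti tj A) -> is_cover U ->
  exists V : family X, is_cover V /\ (forall A, V A -> regular_open ti tj A) /\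
    closure_refines tj V U.
Proof.
  intros AR HU CU.
  exists (fun V => regular_open ti tj V /\ exists B, U B /\ subset (closure tj V) B).
  split; [|split].
  - intro x. destruct (CU x) as [B [UB Bx]].
    destruct (AR x B (HU B UB) Bx) as [V [RV [Vx HVB]]].
    exists V. split; [split; [exact RV|]; exists B; auto | exact Vx].
  - intros A [RA _]. exact RA.
  - intros A [_ HA]. exact HA.
Qed.

Lemma nearly_paralindelof1_regular_refinement {X} (ti tj : topology X) :
  almost_regular ti tj -> nearly_paralindelof1 ti tj ->
  forall U : family X,
    (forall A, U A -> regular_open ti tj A) -> is_cover U ->
    exists V : family X, refines V U /\ is_cover V /\
      (forall A, V A -> regular_open ti tj A) /\ locally_countable tj V.
Proof.
  intros AR NP U HU CU.
  destruct (almost_regular_shrinking ti tj U AR HU CU) as [V [CV [RV HVU]]].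
  destruct (NP V RV CV) as [W [HWV [CW [OW LW]]]].
  exists (regularize ti tj W). repeat split.
  - exact (regularize_refines ti tj V W U HVU HWV).
  - exact (regularize_cover ti tj W OW CW).
  - apply regularize_regular_open.
  - exact (locally_countable_regularize ti tj W LW).
Qed.

Lemma regular_refinement_nearly_paralindelof1 {X} (ti tj : topology X) :
  (forall U : family X,
    (forall A, U A -> regular_open ti tj A) -> is_cover U ->
    exists V : family X, refines V U /\ is_cover V /\
      (forall A, V A -> regular_open ti tj A) /\ locally_countable tj V) ->
  nearly_paralindelof1 ti tj.
Proof.
  intros H U HU CU. destruct (H U HU CU) as [V [HVU [CV [RV LV]]]].
  exists V. repeat split; auto.
  intros A VA. exact (regular_open_open ti tj A (RV A VA)).
Qed.

Theorem mainTheorem3 (X : Type) (t1 t2 : topology X) (i j : idx) :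
  i <> j ->
  almost_regular (top t1 t2 i) (top t1 t2 j) ->
  P_space (top t1 t2 j) ->
  (nearly_paralindelof1 (top t1 t2 i) (top t1 t2 j) <->
   forall U : family X,
     (forall A, U A -> regular_open (top t1 t2 i) (top t1 t2 j) A) ->
     is_cover U ->
     exists V : family X, refines V U /\ is_cover V /\
       (forall A, V A -> regular_open (top t1 t2 i) (top t1 t2 j) A) /\
       locally_countable (top t1 t2 j) V).
Proof.
  intros _ AR _. split.
  - exact (nearly_paralindelof1_regular_refinement _ _ AR).
  - apply regular_refinement_nearly_paralindelof1.
Qed.
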